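(* Let $\kappa$ be a regular uncountable cardinal and let $\mathscr{U},\mathscr{V}$ be ultrafilters over $\kappa$ such that $\mathscr{U}\leq_{\mathrm{RK}}\mathscr{V}$. If $\mathrm{Gal}(\mathscr{V},\kappa,\kappa^+)$ holds, then $\mathrm{Gal}(\mathscr{U},\kappa,\kappa^+)$ holds.
   Context: For a regular uncountable cardinal $\kappa$, a cardinal $\lambda$ and a filter $\mathscr{F}$ over $\kappa$, $\mathrm{Gal}(\mathscr{F},\kappa,\lambda)$ (Galvin's property) means: every sequence $\langle A_\alpha\mid \alpha<\lambda\rangle$ of members of $\mathscr{F}$ admits a subsequence $\langle A_{\alpha_\beta}\mid \beta<\kappa\rangle$ (i.e. a set of $\kappa$ many indices) with $\bigcap_{\beta<\kappa}A_{\alpha_\beta}\in\mathscr{F}$. $\mathscr{U}\leq_{\mathrm{RK}}\mathscr{V}$ (Rudin–Keisler) means there is $f\colon\kappa\to\kappa$ such that for every $X\subseteq\kappa$, $X\in\mathscr{U}$ iff $f^{-1}[X]\in\mathscr{V}$. *)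

From HB Require Import structures.
From mathcomp Require Import all_boot all_order.
From mathcomp Require Import boolp classical_sets functions cardinality filter.
Set Implicit Arguments. Unset Strict Implicit. Unset Printing Implicit Defensive.
Local Open Scope classical_set_scope.
Local Open Scope card_scope.

(* The cardinal kappa is represented by a type K (its elements = kappa);
   everything below depends only on the cardinality of K. *)

Definition card_lt T U (A : set T) (B : set U) := A #<= B /\ ~ (B #<= A).

(* Index sets of size < |K| are represented by subsets J of K. *)
Definition regular_uncountable (K : Type) :=
  ~ countable [set: K] /\
  forall (J : set K) (A : K -> set K),
    card_lt J [set: K] -> (forall j, J j -> card_lt (A j) [set: K]) ->
    card_lt (\bigcup_(j in J) A j) [set: K].

Definition is_succ_card (K L : Type) :=
  card_lt [set: K] [set: L] /\
  forall S : set L, S #<= [set: K] \/ S #= [set: L].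

(* Galvin's property Gal(F, kappa, lambda), lambda represented by the type L:
   every L-sequence of members of F has kappa many indices whose
   intersection is in F. *)
Definition Galvin (K L : Type) (F : set_system K) :=
  forall A : L -> set K, (forall a, F (A a)) ->
    exists I : set L, I #= [set: K] /\ F (\bigcap_(a in I) A a).

Definition RK_le (K : Type) (U V : set_system K) :=
  exists f : K -> K, forall X : set K, U X <-> V (f @^-1` X).

From mathcomp Require Import all_boot all_order.
From mathcomp Require Import boolp classical_sets functions cardinality filter.

Local Open Scope classical_set_scope.

(* If f witnesses U <=_RK V, pull an L-sequence of members of U back along f
   to members of V; Galvin's property for V yields kappa many indices whose
   preimages meet in V, and since preimage commutes with intersection the
   original sets meet in U. No property of kappa, lambda or of the filters is
   needed. *)

Lemma Galvin_RK_le (K L : Type) (U V : set_system K) :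
  RK_le U V -> Galvin L V -> Galvin L U.
Proof.
move=> [f RK_f] GalV A UA.
have [I [cardI VI]] := GalV (fun a => f @^-1` A a) (fun a => (RK_f _).1 (UA a)).
by exists I; split; rewrite // RK_f preimage_bigcap.
Qed.

Theorem lemma2p1 (K L : Type) (U V : set_system K) :
  regular_uncountable K -> is_succ_card K L ->
  UltraFilter U -> UltraFilter V -> RK_le U V ->
  Galvin L V -> Galvin L U.
Proof. by move=> _ _ _ _; exact: Galvin_RK_le. Qed.
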